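(* Let $m\geq 1$ be an integer and let $h:{}^m\mathbb{A}\to{}^m\mathbb{A}$ be a homeomorphism. Then there is a pairwise disjoint sequence of basic clopen boxes $U_n=\prod_{j\in m} I^j_n$ ($n\in\omega$), each $I^j_n$ a clopen interval of $\mathbb{A}$, such that $\bigcup_n U_n$ is dense in ${}^m\mathbb{A}$ and for each $n$ we have $h\restriction U_n=\sigma\circ(h^0\times\cdots\times h^{m-1})$, where each $h^j:I^j_n\to\mathbb{A}$ is a strictly monotone homeomorphism onto a clopen interval of $\mathbb{A}$, and $\sigma:{}^m\mathbb{A}\to{}^m\mathbb{A}$ is a permutation of the coordinates (i.e. there is a bijection $\tau$ of $m=\{0,\dots,m-1\}$ with $\sigma(y)(\tau(j))=y(j)$ for all $y$ and $j$).
   Context: Let $\mathbb{A}_0=\,]0,1]\times\{0\}$, $\mathbb{A}_1=[0,1[\,\times\{1\}$ and $\mathbb{A}=\mathbb{A}_0\cup\mathbb{A}_1$, ordered lexicographically: $\langle a,r\rangle\prec\langle b,s\rangle$ iff $a<b$, or $a=b$ and $r<s$; $\mathbb{A}$ (the double arrow space) carries the order topology. ${}^m\mathbb{A}$ is the $m$-th power with the product topology, elements viewed as functions $m=\{0,\dots,m-1\}\to\mathbb{A}$. A clopen interval is a nonempty convex subset of $\mathbb{A}$ that is clopen. A partial function $f:\mathbb{A}\to\mathbb{A}$ is strictly monotone if it is strictly increasing or strictly decreasing. $h^0\times\cdots\times h^{m-1}$ is the product map $x\mapsto (h^0(x(0)),\dots,h^{m-1}(x(m-1)))$. *)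

From mathcomp Require Import all_boot all_order all_algebra.
From mathcomp Require Import reals.
Set Implicit Arguments. Unset Strict Implicit. Unset Printing Implicit Defensive.
Import Order.TTheory GRing.Theory Num.Theory.
Local Open Scope ring_scope.

(* A = ]0,1] x {0}  U  [0,1[ x {1};  the bool is the second coordinate
   (false = 0, true = 1). *)
Definition dA (R : realType) :=
  {p : R * bool | if p.2 then (0 <= p.1) && (p.1 < 1) else (0 < p.1) && (p.1 <= 1)}.

Definition ltA (R : realType) (x y : dA R) : Prop :=
  (sval x).1 < (sval y).1 \/
  ((sval x).1 = (sval y).1 /\ (sval x).2 = false /\ (sval y).2 = true).

(* order topology: every point of U has a basic neighbourhood
   (open interval / open ray / whole space) inside U *)
Definition openA (R : realType) (U : dA R -> Prop) : Prop :=
  forall x, U x -> exists (lo hi : option (dA R)),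
    (forall a, lo = Some a -> ltA a x) /\ (forall b, hi = Some b -> ltA x b) /\
    (forall y, (forall a, lo = Some a -> ltA a y) ->
               (forall b, hi = Some b -> ltA y b) -> U y).

Definition clopenA (R : realType) (U : dA R -> Prop) : Prop :=
  openA U /\ openA (fun x => ~ U x).

Definition convexA (R : realType) (U : dA R -> Prop) : Prop :=
  forall x y z, U x -> U z -> ltA x y -> ltA y z -> U y.

Definition clopen_intervalA (R : realType) (U : dA R -> Prop) : Prop :=
  (exists x, U x) /\ convexA U /\ clopenA U.

Definition openP (R : realType) (m : nat) (U : ('I_m -> dA R) -> Prop) : Prop :=
  forall x, U x -> exists V : 'I_m -> dA R -> Prop,
    (forall j, openA (V j) /\ V j (x j)) /\
    (forall y, (forall j, V j (y j)) -> U y).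

Definition continuousP (R : realType) (m : nat) (f : ('I_m -> dA R) -> ('I_m -> dA R)) :=
  forall V, openP V -> openP (fun x => V (f x)).

Definition homeomorphismP (R : realType) (m : nat) (h : ('I_m -> dA R) -> ('I_m -> dA R)) :=
  exists g, (forall x, g (h x) = x) /\ (forall y, h (g y) = y) /\
            continuousP h /\ continuousP g.

Definition continuous_onA (R : realType) (I : dA R -> Prop) (f : dA R -> dA R) :=
  forall V, openA V -> exists W, openA W /\ forall x, I x -> (V (f x) <-> W x).

Definition homeo_ontoA (R : realType) (I J : dA R -> Prop) (f : dA R -> dA R) :=
  exists g : dA R -> dA R,
    (forall x, I x -> J (f x) /\ g (f x) = x) /\
    (forall y, J y -> I (g y) /\ f (g y) = y) /\
    continuous_onA I f /\ continuous_onA J g.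

Definition strictly_monotone_onA (R : realType) (I : dA R -> Prop) (f : dA R -> dA R) :=
  (forall x y, I x -> I y -> ltA x y -> ltA (f x) (f y)) \/
  (forall x y, I x -> I y -> ltA x y -> ltA (f y) (f x)).

From mathcomp Require Import all_boot all_order all_algebra.
From mathcomp Require Import boolp classical_sets reals lra.
Set Implicit Arguments. Unset Strict Implicit. Unset Printing Implicit Defensive.
Import Order.TTheory GRing.Theory Num.Theory.
Local Open Scope ring_scope.

(** Every continuous [f : A^m -> A] is, on some box, monotone, and for each
   coordinate [j] either independent of [x_j] or a function of [x_j] alone.  Both
   facts come from the Baire category theorem: around each point [x], [f] maps a
   small product of half-open neighbourhoods to one side of [f x]; the side and the
   radius, coded as one natural number, are constant on a dense subset of some box,
   and density plus continuity spread this side condition to all suitably ordered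
   pairs of points of the box.  For the coordinates [h_i] of a homeomorphism [h],
   injectivity of [h] and continuity of [h^-1] force each [h_i] to depend on exactly
   one coordinate [x_j], the assignment being a permutation, and on suitable clopen
   intervals the resulting one-variable maps are monotone homeomorphisms.  Boxes of
   this kind, chosen greedily inside the successive rational boxes away from the
   earlier ones, form the dense disjoint family. *)

(** * The double arrow space *)

Section DoubleArrowOrder.
Variable R : realType.
Local Notation A := (dA R).
Implicit Types (x y z : A) (a : R).

Definition rval x : R := (sval x).1.
Definition upper x : bool := (sval x).2.
Definition level x : R := if upper x then 1 else 0.

Lemma dA_bounds x : (level x = 0 \/ level x = 1) /\ 0 <= rval x /\ rval x <= 1 /\
  (level x = 1 -> rval x < 1) /\ (level x = 0 -> 0 < rval x).
Proof.
rewrite /level /rval /upper; case: x => [[a []]] /= /andP[H1 H2]; lra.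
Qed.

Lemma dA_eq x y : rval x = rval y -> level x = level y -> x = y.
Proof.
case: x y => [[a s] Ha] [[b t] Hb]; rewrite /rval /level /upper /= => Eab Est.
have Est' : s = t by case: s t Est {Ha Hb} => [] [] //= ; lra.
move: Ha Hb; rewrite Eab Est' => Ha Hb; congr exist; exact: bool_irrelevance.
Qed.

Definition dA1 : A := exist _ (1, false) (andb_true_intro (conj (@ltr01 R) (lexx 1))).

Definition mkdA a (u : bool) : A := insubd dA1 (a, u).

Lemma mkdAE a u : (if u then (0 <= a) && (a < 1) else (0 < a) && (a <= 1)) ->
  rval (mkdA a u) = a /\ upper (mkdA a u) = u.
Proof. by move=> H; rewrite /rval /upper /mkdA insubdK. Qed.

Lemma mkdA_upper a : 0 <= a -> a < 1 -> rval (mkdA a true) = a /\ level (mkdA a true) = 1.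
Proof.
by move=> H1 H2; have [-> E] := @mkdAE a true ltac:(by rewrite H1 H2); rewrite /level E.
Qed.

Lemma mkdA_lower a : 0 < a -> a <= 1 -> rval (mkdA a false) = a /\ level (mkdA a false) = 0.
Proof.
by move=> H1 H2; have [-> E] := @mkdAE a false ltac:(by rewrite H1 H2); rewrite /level E.
Qed.

Lemma ltAE x y : ltA x y <-> rval x < rval y \/ rval x = rval y /\ level x < level y.
Proof.
rewrite /ltA /level /rval /upper; case: (sval x).2; case: (sval y).2; split;
  case=> [|[E H]]; try lra; by [left | right].
Qed.

Definition leA x y := ltA x y \/ x = y.

Lemma leAE x y : leA x y <-> rval x < rval y \/ rval x = rval y /\ level x <= level y.
Proof.
rewrite /leA ltAE; split=> [[H|->]|H]; [lra | lra |].
have [Hlt|Heq] : (rval x < rval y \/ rval x = rval y /\ level x < level y) \/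
  rval x = rval y /\ level x = level y by lra.
- by left.
- by right; apply: dA_eq; case: Heq.
Qed.

Lemma ltA_irr x : ~ ltA x x.
Proof. rewrite ltAE; lra. Qed.

Lemma ltA_trans x y z : ltA x y -> ltA y z -> ltA x z.
Proof. rewrite !ltAE; lra. Qed.

Lemma ltAW x y : ltA x y -> leA x y.
Proof. by left. Qed.

Lemma leA_refl x : leA x x.
Proof. by right. Qed.

Lemma leA_ltA_trans x y z : leA x y -> ltA y z -> ltA x z.
Proof. rewrite leAE !ltAE; lra. Qed.

Lemma ltA_leA_trans x y z : ltA x y -> leA y z -> ltA x z.
Proof. rewrite leAE !ltAE; lra. Qed.

Lemma leA_anti x y : leA x y -> leA y x -> x = y.
Proof. by rewrite !leAE => H1 H2; apply: dA_eq; lra. Qed.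

Lemma leA_total x y : leA x y \/ leA y x.
Proof. rewrite !leAE; lra. Qed.

Lemma ltA_geF x y : ltA x y -> ~ leA y x.
Proof. rewrite leAE ltAE; lra. Qed.

Lemma ltANge x y : ~ leA x y -> ltA y x.
Proof. rewrite leAE ltAE; lra. Qed.

Lemma leANgt x y : ~ ltA x y -> leA y x.
Proof. rewrite leAE ltAE; lra. Qed.

End DoubleArrowOrder.

Section DoubleArrowTopology.
Variable R : realType.
Local Notation A := (dA R).
Implicit Types (a c x y z : A) (U V : A -> Prop) (e p q : R).

Definition half_ball x e z : Prop :=
  if upper x then leA x z /\ rval z < rval x + e else leA z x /\ rval x - e < rval z.

Lemma half_ballE x e z : half_ball x e z <->
  (level x = 1 /\ leA x z /\ rval z < rval x + e) \/
  (level x = 0 /\ leA z x /\ rval x - e < rval z).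
Proof.
rewrite /half_ball /level; case: (upper x); split.
- by left.
- by case=> [[_ H]|[H _]] //; lra.
- by right.
- by case=> [[H _]|[_ H]] //; lra.
Qed.

Lemma half_ball_le x e e' z : e <= e' -> half_ball x e z -> half_ball x e' z.
Proof. by rewrite /half_ball; case: (upper x) => H [H1 H2]; split=> //; lra. Qed.

Lemma openA_half_ball U x : openA U -> U x ->
  exists e, 0 < e /\ forall z, half_ball x e z -> U z.
Proof.
move=> HU Ux; have [lo [hi [Hlo [Hhi HV]]]] := HU x Ux.
have Lx : level x = if upper x then 1 else 0 by []; have Bx := dA_bounds x.
rewrite /half_ball; case: (upper x) in Lx *.
- exists (if hi is Some b then rval b - rval x else 1); split.
  + case: hi Hhi {HV} => [b|] Hb; last lra.
    have := Hb b erefl; rewrite ltAE; have := dA_bounds b; lra.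
  + move=> z [Hxz Hz]; apply: HV.
    * by move=> a /Hlo Ha; apply: ltA_leA_trans Ha Hxz.
    * by move=> b Eb; rewrite Eb in Hz; rewrite ltAE; left; lra.
- exists (if lo is Some b then rval x - rval b else 1); split.
  + case: lo Hlo {HV} => [b|] Hb; last lra.
    have := Hb b erefl; rewrite ltAE; have := dA_bounds b; lra.
  + move=> z [Hzx Hz]; apply: HV.
    * by move=> a Ea; rewrite Ea in Hz; rewrite ltAE; left; lra.
    * by move=> b /Hhi Hb; apply: leA_ltA_trans Hzx Hb.
Qed.

Lemma half_ball_interval x e : 0 < e -> exists lo hi : option A,
  (forall a, lo = Some a -> ltA a x) /\ (forall b, hi = Some b -> ltA x b) /\
  (forall y, (forall a, lo = Some a -> ltA a y) -> (forall b, hi = Some b -> ltA y b) ->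
     half_ball x e y).
Proof.
move=> He; have Lx : level x = if upper x then 1 else 0 by [].
have [Bx0 [Bx1 [Bx2 [Bx3 Bx4]]]] := dA_bounds x.
rewrite /half_ball; case: (upper x) in Lx *.
- exists (if 0 < rval x then Some (mkdA (rval x) false) else None).
  exists (if rval x + e <= 1 then Some (mkdA (rval x + e) false) else None).
  split; [|split].
  + case: ifP => // H a [<-]; have [E1 E2] := mkdA_lower H Bx2; rewrite ltAE E1 E2; lra.
  + case: ifP => // H b [<-].
    have [E1 E2] := @mkdA_lower _ (rval x + e) ltac:(lra) H; rewrite ltAE E1 E2; lra.
  + move=> y Hlo Hhi; have By := dA_bounds y; rewrite leAE; split.
    * move: Hlo; case: (ltrP 0 (rval x)) => H Hlo; last lra.
      have := Hlo _ erefl; have [E1 E2] := mkdA_lower H Bx2; rewrite ltAE E1 E2; lra.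
    * move: Hhi; case: (lerP (rval x + e) 1) => H Hhi; last lra.
      have := Hhi _ erefl; have [E1 E2] := @mkdA_lower _ (rval x + e) ltac:(lra) H.
      rewrite ltAE E1 E2; lra.
- exists (if 0 <= rval x - e then Some (mkdA (rval x - e) true) else None).
  exists (if rval x < 1 then Some (mkdA (rval x) true) else None).
  split; [|split].
  + case: ifP => // H a [<-].
    have [E1 E2] := @mkdA_upper _ (rval x - e) H ltac:(lra); rewrite ltAE E1 E2; lra.
  + case: ifP => // H b [<-]; have [E1 E2] := mkdA_upper Bx1 H; rewrite ltAE E1 E2; lra.
  + move=> y Hlo Hhi; have By := dA_bounds y; rewrite leAE; split.
    * move: Hhi; case: (ltrP (rval x) 1) => H Hhi; last lra.
      have := Hhi _ erefl; have [E1 E2] := mkdA_upper Bx1 H; rewrite ltAE E1 E2; lra.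
    * move: Hlo; case: (lerP 0 (rval x - e)) => H Hlo; last lra.
      have := Hlo _ erefl; have [E1 E2] := @mkdA_upper _ (rval x - e) H ltac:(lra).
      rewrite ltAE E1 E2; lra.
Qed.

Lemma openA_half_balls U :
  (forall x, U x -> exists e, 0 < e /\ forall z, half_ball x e z -> U z) -> openA U.
Proof.
move=> H x Ux; have [e [He Hz]] := H x Ux.
have [lo [hi [H1 [H2 H3]]]] := half_ball_interval x He.
by exists lo, hi; do 2 split=> //; move=> y Hl Hh; apply: Hz; exact: H3.
Qed.

Lemma openAT : openA (fun _ : A => True).
Proof. by move=> x _; exists None, None. Qed.

Lemma openA_ext U V : (forall a, U a <-> V a) -> openA U -> openA V.
Proof.
move=> E HU x /E Ux; have [lo [hi [H1 [H2 H3]]]] := HU x Ux.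
by exists lo, hi; do 2 split => //; move=> y Hl Hh; apply/E; apply: H3.
Qed.

Lemma openA_or U V : openA U -> openA V -> openA (fun x => U x \/ V x).
Proof.
move=> HU HV x [Ux|Vx].
- have [lo [hi [H1 [H2 H3]]]] := HU x Ux; exists lo, hi; do 2 split => //.
  by move=> y Hl Hh; left; apply: H3.
- have [lo [hi [H1 [H2 H3]]]] := HV x Vx; exists lo, hi; do 2 split => //.
  by move=> y Hl Hh; right; apply: H3.
Qed.

Lemma openA_and U V : openA U -> openA V -> openA (fun x => U x /\ V x).
Proof.
move=> HU HV; apply: openA_half_balls => x [Ux Vx].
have [e1 [He1 H1]] := openA_half_ball HU Ux.
have [e2 [He2 H2]] := openA_half_ball HV Vx.
exists (Num.min e1 e2); split; first by rewrite lt_min He1 He2.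
move=> z Hz; split.
- by apply: H1; apply: half_ball_le Hz; rewrite ge_min lexx.
- by apply: H2; apply: half_ball_le Hz; rewrite ge_min lexx orbT.
Qed.

Lemma openA_ltA c : openA (fun u => ltA u c).
Proof.
by move=> x Hx; exists None, (Some c); split=> //; split=> [b [<-]|y _ H] //; exact: H.
Qed.

Lemma openA_gtA c : openA (fun u => ltA c u).
Proof.
by move=> x Hx; exists (Some c), None; split=> [b [<-]|] //; split=> // y H _; exact: H.
Qed.

Lemma ltA_separate x y : ltA x y -> exists U V, openA U /\ openA V /\ U x /\ V y /\
  forall u v, U u -> V v -> ltA u v.
Proof.
move=> Hxy; case: (pselect (exists c, ltA x c /\ ltA c y)) => [[c [H1 H2]]|Hn].
- exists (fun u => ltA u c), (fun v => ltA c v); do !split=> //;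
    [exact: openA_ltA | exact: openA_gtA | move=> u v Hu Hv; exact: ltA_trans Hu Hv].
- exists (fun u => ltA u y), (fun v => ltA x v); do !split=> //;
    [exact: openA_ltA | exact: openA_gtA |].
  move=> u v Hu Hv; case: (pselect (ltA x u)) => Hxu; first by case: Hn; exists u.
  exact: leA_ltA_trans (leANgt Hxu) Hv.
Qed.

(* [itv p q] is the clopen interval [<p,1>, <q,0>]. *)
Definition itv p q x : Prop :=
  (p < rval x \/ p = rval x /\ level x = 1) /\ (rval x < q \/ rval x = q /\ level x = 0).

Lemma itv_open p q : openA (itv p q).
Proof.
apply: openA_half_balls => x; rewrite /itv => Hx.
have [[Lx|Lx] _] := dA_bounds x; [exists (rval x - p) | exists (q - rval x)];
  split; try lra; by move=> z; rewrite half_ballE !leAE; have := dA_bounds z; lra.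
Qed.

Lemma itvC_open p q : openA (fun x => ~ itv p q x).
Proof.
apply: openA_half_balls => x; rewrite /itv => Hx.
have [[Lx|Lx] Bx] := dA_bounds x.
- case: (ltrP q (rval x)) => Hq.
  + exists (rval x - q); split; first lra.
    by move=> z; rewrite half_ballE !leAE; have := dA_bounds z; lra.
  + exists 1; split; first lra.
    by move=> z; rewrite half_ballE !leAE; have := dA_bounds z; lra.
- case: (ltrP (rval x) p) => Hp.
  + exists (p - rval x); split; first lra.
    by move=> z; rewrite half_ballE !leAE; have := dA_bounds z; lra.
  + exists 1; split; first lra.
    by move=> z; rewrite half_ballE !leAE; have := dA_bounds z; lra.
Qed.

Lemma itv_convex p q x y z : itv p q x -> itv p q z -> leA x y -> leA y z -> itv p q y.
Proof.
move=> [Hx _] [_ Hz]; rewrite !leAE => Hxy Hyz; split.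
- by move: Hx Hxy; have := dA_bounds x; have := dA_bounds y; lra.
- by move: Hz Hyz; have := dA_bounds z; have := dA_bounds y; lra.
Qed.

Lemma itv_clopen_interval p q : 0 <= p -> p < q -> q <= 1 -> clopen_intervalA (itv p q).
Proof.
move=> H1 H2 H3; have [E1 E2] := @mkdA_upper _ ((p + q) / 2) ltac:(lra) ltac:(lra).
split; first by exists (mkdA ((p + q) / 2) true); rewrite /itv E1 E2; lra.
split; last by split; [exact: itv_open | exact: itvC_open].
by move=> x y z Hx Hz /ltAW Hxy /ltAW Hyz; exact: itv_convex Hx Hz Hxy Hyz.
Qed.

Lemma itv_sub p q p' q' x : p <= p' -> q' <= q -> itv p' q' x -> itv p q x.
Proof. rewrite /itv; lra. Qed.

Lemma itv_rval p q x : itv p q x -> p <= rval x /\ rval x <= q.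
Proof. rewrite /itv; lra. Qed.

Lemma itv_inner p q x : p < rval x -> rval x < q -> itv p q x.
Proof. rewrite /itv; lra. Qed.

Lemma itv_subset_bounds p q p' q' : 0 <= p' -> p' < q' -> q' <= 1 ->
  (forall x, itv p' q' x -> itv p q x) -> p <= p' /\ q' <= q.
Proof.
move=> H0 Hpq H1 Hsub.
have [E1 E2] := mkdA_upper H0 (lt_le_trans Hpq H1).
have [E3 E4] := mkdA_lower (le_lt_trans H0 Hpq) H1.
have := Hsub (mkdA p' true); have := Hsub (mkdA q' false).
by rewrite /itv E1 E2 E3 E4; lra.
Qed.

Lemma itv_around V c : openA V -> V c ->
  exists p q, 0 <= p /\ p < q /\ q <= 1 /\ itv p q c /\ forall d, itv p q d -> V d.
Proof.
move=> HV Vc; have [e [He Hs]] := openA_half_ball HV Vc.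
have [[Lc|Lc] [Bc0 [Bc1 [Bc2 Bc3]]]] := dA_bounds c.
- have Hc := Bc3 Lc; pose s := Num.max (rval c - e) 0.
  have S1 : rval c - e <= s by rewrite le_max lexx.
  have S2 : 0 <= s by rewrite le_max lexx orbT.
  have S3 : s < rval c by rewrite gt_max; apply/andP; split; lra.
  clearbody s; exists ((s + rval c) / 2), (rval c).
  do 3!(split; first lra); split; first by rewrite /itv; lra.
  move=> d Hd; apply: Hs; rewrite half_ballE !leAE; move: Hd; rewrite /itv.
  by have := dA_bounds d; lra.
- have Hc := Bc2 Lc; pose s := Num.min (rval c + e) 1.
  have S1 : s <= rval c + e by rewrite ge_min lexx.
  have S2 : s <= 1 by rewrite ge_min lexx orbT.
  have S3 : rval c < s by rewrite lt_min; apply/andP; split; lra.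
  clearbody s; exists (rval c), ((s + rval c) / 2).
  do 3!(split; first lra); split; first by rewrite /itv; lra.
  move=> d Hd; apply: Hs; rewrite half_ballE !leAE; move: Hd; rewrite /itv.
  by have := dA_bounds d; lra.
Qed.

Lemma openA_not_singleton V a : openA V -> V a -> exists z, V z /\ z <> a.
Proof.
move=> HV Va; have [p [q [H0 [Hpq [H1 [_ HVpq]]]]]] := itv_around HV Va.
have [E1 E2] := @mkdA_upper _ ((p + q) / 2) ltac:(lra) ltac:(lra).
have [E3 E4] := @mkdA_lower _ ((p + q) / 2) ltac:(lra) ltac:(lra).
have [Hu Hl] : V (mkdA ((p + q) / 2) true) /\ V (mkdA ((p + q) / 2) false).
  by split; apply: HVpq; apply: itv_inner; rewrite ?E1 ?E3; lra.
case: (pselect (mkdA ((p + q) / 2) true = a)) => Ea.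
  by exists (mkdA ((p + q) / 2) false); split=> // Eb; move: E2 E4; rewrite Ea -Eb; lra.
by exists (mkdA ((p + q) / 2) true).
Qed.

Definition relA (b : bool) (u v : A) := if b then leA u v else leA v u.

Lemma relA_refl b u : relA b u u.
Proof. by case: b; exact: leA_refl. Qed.

Lemma relA_anti b u v : relA b u v -> relA b v u -> u = v.
Proof. by case: b => H1 H2; apply: leA_anti. Qed.

Lemma relA_negb b u v : relA (~~ b) u v -> relA b v u.
Proof. by case: b. Qed.

Lemma openA_relA_upper (c : A) : openA (fun w => relA (upper c) c w).
Proof.
apply: openA_half_balls => w; rewrite /relA.
have Lc : level c = if upper c then 1 else 0 by [].
have Lw : level w = if upper w then 1 else 0 by [].
have := dA_bounds c; have := dA_bounds w.
case: (upper c) Lc => Lc; case: (upper w) Lw => Lw Bw Bc; rewrite !leAE => Hcw.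
- by exists 1; split; [lra | move=> z; rewrite half_ballE !leAE; have := dA_bounds z; lra].
- exists (rval w - rval c); split; first lra.
  by move=> z; rewrite half_ballE !leAE; have := dA_bounds z; lra.
- exists (rval c - rval w); split; first lra.
  by move=> z; rewrite half_ballE !leAE; have := dA_bounds z; lra.
- by exists 1; split; [lra | move=> z; rewrite half_ballE !leAE; have := dA_bounds z; lra].
Qed.

Lemma relA_separate o (u v : A) : ~ relA o u v ->
  exists U V, openA U /\ openA V /\ U u /\ V v /\ forall u' v', U u' -> V v' -> ~ relA o u' v'.
Proof.
case: o => /ltANge Hlt.
- have [U [V [HU [HV [Uv [Vu Hsep]]]]]] := ltA_separate Hlt.
  by exists V, U; do 4!split=> //; move=> u' v' Hu Hv; exact: ltA_geF (Hsep _ _ Hv Hu).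
- have [U [V [HU [HV [Uu [Vv Hsep]]]]]] := ltA_separate Hlt.
  by exists U, V; do 4!split=> //; move=> u' v' Hu Hv; exact: ltA_geF (Hsep _ _ Hu Hv).
Qed.

(* [w] is the identity if [a = b] and the constant [b] otherwise. *)
Lemma itv_relA_witness (p q : R) (t : bool) (a b : A) (Va Vb : A -> Prop) :
  itv p q a -> itv p q b -> openA Va -> openA Vb -> Va a -> Vb b -> relA t a b ->
  exists p' q' (w : A -> A), [/\ 0 <= p', p' < q', q' <= 1, p <= p' & q' <= q] /\
    forall d, itv p' q' d -> [/\ Va d, Vb (w d), itv p q (w d) & relA t d (w d)].
Proof.
move=> Ha Hb HVa HVb Va_a Vb_b Hab.
case: (pselect (a = b)) => [Eab|Nab]; first subst b.
- have HV := openA_and (openA_and HVa HVb) (@itv_open p q).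
  have [p' [q' [H0 [H1 [H2 [_ Hsub]]]]]] := itv_around HV (conj (conj Va_a Vb_b) Ha).
  have [Hp Hq] := itv_subset_bounds H0 H1 H2 (fun d Hd => (Hsub d Hd).2).
  exists p', q', id; split=> // d Hd; have [[? ?] ?] := Hsub d Hd.
  by split=> //; exact: relA_refl.
- have [U [HU [Ua HUb]]] : exists U, openA U /\ U a /\ forall u, U u -> relA t u b.
    case: t Hab => -[Hlt|E]; try by case: Nab.
    + by exists (fun u => ltA u b); split; [exact: openA_ltA | split=> // u Hu; left].
    + by exists (fun u => ltA b u); split; [exact: openA_gtA | split=> // u Hu; left].
  have HV := openA_and (openA_and HVa HU) (@itv_open p q).
  have [p' [q' [H0 [H1 [H2 [_ Hsub]]]]]] := itv_around HV (conj (conj Va_a Ua) Ha).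
  have [Hp Hq] := itv_subset_bounds H0 H1 H2 (fun d Hd => (Hsub d Hd).2).
  exists p', q', (fun _ => b); split=> // d Hd; have [[? Ud] ?] := Hsub d Hd.
  by split=> //; exact: HUb.
Qed.

End DoubleArrowTopology.

(** * Boxes in the product *)

Section Boxes.
Variables (R : realType) (m : nat).
Local Notation A := (dA R).
Local Notation Pt := ('I_m -> dA R).
Implicit Types (x y z : Pt) (p q : 'I_m -> R) (U V : Pt -> Prop).

Definition box p q x := forall j, itv (p j) (q j) (x j).
Definition valid_box p q := forall j, 0 <= p j /\ p j < q j /\ q j <= 1.
Definition subbox p' q' p q := forall j, p j <= p' j /\ q' j <= q j.
Definition dense_box (S : Pt -> Prop) p q :=
  forall p' q', valid_box p' q' -> subbox p' q' p q -> exists x, box p' q' x /\ S x.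

Lemma subbox_refl p q : subbox p q p q.
Proof. by move=> j; split. Qed.

Lemma subbox_trans p1 q1 p2 q2 p3 q3 :
  subbox p1 q1 p2 q2 -> subbox p2 q2 p3 q3 -> subbox p1 q1 p3 q3.
Proof. by move=> H1 H2 j; have := H1 j; have := H2 j; lra. Qed.

Lemma box_sub p' q' p q x : subbox p' q' p q -> box p' q' x -> box p q x.
Proof. by move=> H Hx j; have [? ?] := H j; exact: itv_sub (Hx j). Qed.

Lemma dense_box_sub S p q p' q' : dense_box S p q -> subbox p' q' p q -> dense_box S p' q'.
Proof. by move=> HD Hs p1 q1 Hv Hs1; apply: HD Hv _; exact: subbox_trans Hs1 Hs. Qed.

Definition box_mid p q : Pt := fun j => mkdA ((p j + q j) / 2) true.

Lemma box_mid_in p q : valid_box p q -> box p q (box_mid p q).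
Proof.
move=> Hv j; have [? [? ?]] := Hv j.
have [E1 _] := @mkdA_upper R ((p j + q j) / 2) ltac:(lra) ltac:(lra).
by apply: itv_inner; rewrite E1; lra.
Qed.

Lemma box_nonempty (I : 'I_m -> A -> Prop) :
  (forall j, clopen_intervalA (I j)) -> exists x, forall j, I j (x j).
Proof. by move=> HI; have [x Hx] := choice (fun j => (HI j).1); exists x. Qed.

Definition upd x (j : 'I_m) (a : A) : Pt := fun k => if k == j then a else x k.

Lemma upd_eq x j a : upd x j a j = a.
Proof. by rewrite /upd eqxx. Qed.

Lemma upd_neq x j a k : k != j -> upd x j a k = x k.
Proof. by rewrite /upd => /negbTE ->. Qed.

Lemma box_upd p q x j a : box p q x -> itv (p j) (q j) a -> box p q (upd x j a).
Proof. by move=> Hx Ha k; rewrite /upd; case: eqP => [->|_]. Qed.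

Lemma openP_ext U V : (forall x, U x <-> V x) -> openP U -> openP V.
Proof.
move=> E HU x /E Ux; have [W [H1 H2]] := HU x Ux.
by exists W; split=> // y Hy; apply/E; exact: H2.
Qed.

Lemma openP_box p q : openP (box p q).
Proof.
by move=> x Hx; exists (fun j => itv (p j) (q j)); split=> // j; split=> //; exact: itv_open.
Qed.

Lemma openP_and U V : openP U -> openP V -> openP (fun x => U x /\ V x).
Proof.
move=> HU HV x [Ux Vx]; have [W1 [H1 H1']] := HU x Ux; have [W2 [H2 H2']] := HV x Vx.
exists (fun j a => W1 j a /\ W2 j a); split.
- by move=> j; have [? ?] := H1 j; have [? ?] := H2 j; split; [exact: openA_and | split].
- by move=> y Hy; split; [apply: H1' | apply: H2'] => j; case: (Hy j).
Qed.

Lemma openP_coord (W : A -> Prop) (i : 'I_m) : openA W -> openP (fun y => W (y i)).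
Proof.
move=> HW x Hx; exists (fun j => if j == i then W else fun _ => True); split.
- by move=> j; case: eqP => [->|_]; [split | split=> //; exact: openAT].
- by move=> y Hy; have := Hy i; rewrite eqxx.
Qed.

Lemma openP_upd U x j : openP U -> openA (fun a => U (upd x j a)).
Proof.
move=> HU; apply: openA_half_balls => a Ha; have [W [HW HW']] := HU _ Ha.
have [HWj Wa] := HW j; rewrite upd_eq in Wa.
have [e [He He']] := openA_half_ball HWj Wa; exists e; split=> // z Hz; apply: HW' => k.
case: (eqVneq k j) => [->|Hk]; first by rewrite upd_eq; apply: He'.
by rewrite upd_neq //; have [_] := HW k; rewrite upd_neq.
Qed.

Definition continuousPA (f : Pt -> A) := forall W, openA W -> openP (fun x => W (f x)).

Definition prod_ball (e : R) x z := forall k, half_ball (x k) e (z k).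

Lemma ex_inv_nat_lt (e : R) : 0 < e -> exists n : nat, n.+1%:R^-1 < e.
Proof.
move=> He; have He' : 0 <= e^-1 by rewrite invr_ge0 ltW.
have := @archi_boundP _ (e^-1) He'; set N := Num.Def.archi_bound _ => HN.
exists N; rewrite invf_plt ?posrE //; apply: lt_le_trans HN _.
by rewrite ler_nat; exact: leqnSn.
Qed.

Lemma openP_prod_ball U x : openP U -> U x ->
  exists n : nat, forall z, prod_ball n.+1%:R^-1 x z -> U z.
Proof.
move=> HU Ux; have [W [HW HW']] := HU x Ux.
have Hn k : exists n : nat, forall a, half_ball (x k) n.+1%:R^-1 a -> W k a.
  have [HWk Wx] := HW k; have [e [He He']] := openA_half_ball HWk Wx.
  have [n Hn] := ex_inv_nat_lt He.
  by exists n => a Ha; apply: He'; apply: half_ball_le Ha; exact: ltW.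
have [n Hn'] := choice Hn; exists (\max_k n k)%N => z Hz; apply: HW' => k; apply: Hn'.
apply: half_ball_le (Hz k); rewrite lef_pV2 ?posrE ?ltr0n // ler_nat ltnS.
exact: leq_bigmax.
Qed.

Lemma continuousPA_relA (f : Pt -> A) x : continuousPA f ->
  exists n : nat, forall z, prod_ball n.+1%:R^-1 x z -> relA (upper (f x)) (f x) (f z).
Proof.
move=> Hf; apply: (@openP_prod_ball (fun z => relA (upper (f x)) (f x) (f z))).
- by apply: (Hf (relA (upper (f x)) (f x))); exact: openA_relA_upper.
- exact: relA_refl.
Qed.

Definition strict_subbox p' q' p q := forall j, p j < p' j /\ q' j < q j.

Lemma nested_boxes_meet (bs : nat -> ('I_m -> R) * ('I_m -> R)) (tv : 'I_m -> bool) :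
  (forall k, valid_box (bs k).1 (bs k).2) ->
  (forall k, strict_subbox (bs k.+1).1 (bs k.+1).2 (bs k).1 (bs k).2) ->
  exists x, (forall j, upper (x j) = tv j) /\ forall k, box (bs k).1 (bs k).2 x.
Proof.
move=> Hv Hstr.
have Hmono k d j : (bs k).1 j <= (bs (k + d)%N).1 j /\ (bs (k + d)%N).2 j <= (bs k).2 j.
  elim: d => [|d IH]; first by rewrite addn0; lra.
  by rewrite addnS; have := Hstr (k + d)%N j; lra.
have Hpq k l j : (bs l).1 j < (bs k).2 j.
  have [Hkl|Hkl] := leqP k l.
  - have := Hmono k (l - k)%N j; rewrite subnKC //; have := Hv l j; lra.
  - have := Hmono l (k - l)%N j; rewrite subnKC ?(ltnW Hkl) //; have := Hv k j; lra.
pose L j := fun r => exists k, r = (bs k).1 j.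
have HL j : has_sup (L j).
  split; first by exists ((bs 0%N).1 j), 0%N.
  by exists ((bs 0%N).2 j) => r [k ->]; apply: ltW; exact: Hpq.
have Hs k j : (bs k).1 j < sup (L j) < (bs k).2 j.
  apply/andP; split.
  - apply: lt_le_trans (Hstr k j).1 _; apply: sup_upper_bound (HL j) _ _.
    by exists k.+1.
  - apply: le_lt_trans (Hstr k j).2; apply: ge_sup; first by exists ((bs 0%N).1 j), 0%N.
    by move=> r [l ->]; apply: ltW; exact: Hpq.
pose x j := mkdA (sup (L j)) (tv j).
have Hx j : rval (x j) = sup (L j) /\ upper (x j) = tv j.
  apply: mkdAE; have /andP[H1 H2] := Hs 0%N j; have := Hv 0%N j.
  by case: (tv j) => -[? [? ?]]; apply/andP; split; lra.
exists x; split=> [j|k j]; first by case: (Hx j).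
by have /andP[? ?] := Hs k j; apply: itv_inner; rewrite (Hx j).1.
Qed.

End Boxes.

Section BaireArgument.
Variables (R : realType) (m : nat).
Local Notation A := (dA R).
Local Notation Pt := ('I_m -> dA R).
Implicit Types (x y z : Pt) (p q : 'I_m -> R).

Lemma not_dense_box_avoid (S : Pt -> Prop) p q : ~ dense_box S p q ->
  exists p' q', valid_box p' q' /\ strict_subbox p' q' p q /\ forall x, box p' q' x -> ~ S x.
Proof.
move=> Hnd.
have [p2 [q2 [Hv2 [Hs2 Hno]]]] : exists p2 q2,
    valid_box p2 q2 /\ subbox p2 q2 p q /\ ~ exists x, box p2 q2 x /\ S x.
  apply: contrapT => H; apply: Hnd => p2 q2 Hv2 Hs2; apply: contrapT => H2; apply: H.
  by exists p2, q2.
exists (fun j => p2 j + (q2 j - p2 j) / 3), (fun j => q2 j - (q2 j - p2 j) / 3).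
split; [|split].
- by move=> j; have := Hv2 j; lra.
- by move=> j; have := Hv2 j; have := Hs2 j; lra.
- move=> x Hx HS; apply: Hno; exists x; split=> // j.
  by apply: itv_sub (Hx j); have := Hv2 j; lra.
Qed.

Lemma baire_box (S : nat -> Pt -> Prop) (tv : 'I_m -> bool) p q : valid_box p q ->
  (forall x, box p q x -> (forall j, upper (x j) = tv j) -> exists k, S k x) ->
  exists k p' q', valid_box p' q' /\ subbox p' q' p q /\ dense_box (S k) p' q'.
Proof.
move=> Hv Hcov; apply: contrapT => Hn.
have Hstep (kb : nat * (('I_m -> R) * ('I_m -> R))) : exists b : ('I_m -> R) * ('I_m -> R),
    valid_box kb.2.1 kb.2.2 -> subbox kb.2.1 kb.2.2 p q ->
    [/\ valid_box b.1 b.2, strict_subbox b.1 b.2 kb.2.1 kb.2.2 &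
        forall x, box b.1 b.2 x -> ~ S kb.1 x].
  case: (pselect (valid_box kb.2.1 kb.2.2 /\ subbox kb.2.1 kb.2.2 p q)) => [[Hv1 Hs1]|Hno];
    last by exists kb.2 => H1 H2; case: Hno.
  have Hnd : ~ dense_box (S kb.1) kb.2.1 kb.2.2.
    by move=> Hd; apply: Hn; exists kb.1, kb.2.1, kb.2.2.
  by have [p' [q' [Hv' [Hs' Hav]]]] := not_dense_box_avoid Hnd; exists (p', q').
have [F HF] := choice Hstep.
pose bs := fix bs k := if k is k'.+1 then F (k', bs k') else (p, q).
have Hbs k : valid_box (bs k).1 (bs k).2 /\ subbox (bs k).1 (bs k).2 p q.
  elim: k => [|k [IH1 IH2]] /=; first by split=> //; exact: subbox_refl.
  have [H1 H2 _] := HF (k, bs k) IH1 IH2; split=> // j.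
  by have := H2 j; have := IH2 j; lra.
have Hstr k : strict_subbox (bs k.+1).1 (bs k.+1).2 (bs k).1 (bs k).2.
  by have [H1 H2] := Hbs k; have [_ H _] := HF (k, bs k) H1 H2.
have Hav k x : box (bs k.+1).1 (bs k.+1).2 x -> ~ S k x.
  by have [H1 H2] := Hbs k; have [_ _ H] := HF (k, bs k) H1 H2; exact: H.
have [x [Ht Hx]] := nested_boxes_meet tv (fun k => (Hbs k).1) Hstr.
have [k Hk] := Hcov x (Hx 0%N) Ht.
exact: Hav k x (Hx k.+1) Hk.
Qed.

End BaireArgument.

(** * Local structure of continuous maps into the double arrow space *)

Section LocalStructure.
Variables (R : realType) (m : nat).
Local Notation A := (dA R).
Local Notation Pt := ('I_m -> dA R).
Implicit Types (x y z : Pt) (p q : 'I_m -> R) (tv : 'I_m -> bool) (f : Pt -> A).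

Definition relP tv x y := forall j, relA (tv j) (x j) (y j).

Lemma relA_extend_dense f tv o (D : Pt -> Prop) p q : continuousPA f -> dense_box D p q ->
  (forall d z, D d -> box p q d -> box p q z -> relP tv d z -> relA o (f d) (f z)) ->
  forall x y, box p q x -> box p q y -> relP tv x y -> relA o (f x) (f y).
Proof.
move=> Hf HD Hyp x y Hx Hy Hxy; apply: contrapT => Hn.
have [Ua [Ub [HUa [HUb [Uax [Uby Hsep]]]]]] := relA_separate Hn.
have [Vx [HVx HVx']] := Hf _ HUa x Uax.
have [Vy [HVy HVy']] := Hf _ HUb y Uby.
have Hc k : exists t : R * R * (A -> A),
    [/\ 0 <= t.1.1, t.1.1 < t.1.2, t.1.2 <= 1, p k <= t.1.1 & t.1.2 <= q k] /\
    forall d, itv t.1.1 t.1.2 d ->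
      [/\ Vx k d, Vy k (t.2 d), itv (p k) (q k) (t.2 d) & relA (tv k) d (t.2 d)].
  have [p' [q' [w H]]] :=
    itv_relA_witness (Hx k) (Hy k) (HVx k).1 (HVy k).1 (HVx k).2 (HVy k).2 (Hxy k).
  by exists (p', q', w).
have [F HF] := choice Hc.
pose p' k := (F k).1.1; pose q' k := (F k).1.2.
have Hv' : valid_box p' q' by move=> k; have [[? ? ? _ _] _] := HF k.
have Hs' : subbox p' q' p q by move=> k; have [[_ _ _ ? ?] _] := HF k.
have [d [Hd Dd]] := HD p' q' Hv' Hs'.
have Hk k := (HF k).2 (d k) (Hd k).
apply: (Hsep (f d) (f (fun k => (F k).2 (d k)))).
- by apply: HVx' => k; have [] := Hk k.
- by apply: HVy' => k; have [] := Hk k.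
- apply: Hyp => // [|k|k]; first exact: box_sub Hs' Hd.
  + by have [] := Hk k.
  + by have [] := Hk k.
Qed.

Lemma narrow_box p q (e : R) : valid_box p q -> 0 < e ->
  exists q', valid_box p q' /\ subbox p q' p q /\ forall j, q' j - p j < e.
Proof.
move=> Hv He; exists (fun j => Num.min (q j) (p j + e / 2)); split; [|split] => j.
- have := Hv j; have : Num.min (q j) (p j + e / 2) <= q j by rewrite ge_min lexx.
  have : p j < Num.min (q j) (p j + e / 2).
    by rewrite lt_min; apply/andP; split; have := Hv j; lra.
  lra.
- by split=> //; rewrite ge_min lexx.
- have : Num.min (q j) (p j + e / 2) <= p j + e / 2 by rewrite ge_min lexx orbT.
  lra.
Qed.

Lemma narrow_box_prod_ball (e : R) p q tv d z : (forall j, q j - p j < e) ->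
  box p q d -> box p q z -> (forall j, upper (d j) = tv j) -> relP tv d z -> prod_ball e d z.
Proof.
move=> Hw Hd Hz Ht Hr j; rewrite /half_ball Ht; have := Hr j; have := Hw j.
have [? ?] := itv_rval (Hd j); have [? ?] := itv_rval (Hz j).
by rewrite /relA; case: (tv j) => H1 H2; split=> //; lra.
Qed.

Lemma box_relA_side f tv p q : continuousPA f -> valid_box p q ->
  exists o p' q', valid_box p' q' /\ subbox p' q' p q /\
    forall x y, box p' q' x -> box p' q' y -> relP tv x y -> relA o (f x) (f y).
Proof.
move=> Hf Hv.
(* [S (o + 2 n) x]: [f] maps the [1/(n+1)]-ball of [x] to the side [o] of [f x]. *)
pose S k x := (forall j, upper (x j) = tv j) /\
  forall z, prod_ball (k./2).+1%:R^-1 x z -> relA (odd k) (f x) (f z).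
have [k [p1 [q1 [Hv1 [Hs1 Hd1]]]]] :
    exists k p' q', valid_box p' q' /\ subbox p' q' p q /\ dense_box (S k) p' q'.
  apply: (@baire_box _ _ S tv _ _ Hv) => x Hx Ht.
  have [n Hn] := continuousPA_relA x Hf; exists (upper (f x) + n.*2)%N.
  rewrite /S half_bit_double; have -> // : odd (upper (f x) + n.*2) = upper (f x).
  by rewrite oddD odd_double addbF oddb.
have Hpos : (0 : R) < (k./2).+1%:R^-1 by rewrite invr_gt0 ltr0n.
have [q2 [Hv2 [Hs2 Hw2]]] := narrow_box Hv1 Hpos.
exists (odd k), p1, q2; split=> //; split; first exact: subbox_trans Hs2 Hs1.
apply: (@relA_extend_dense _ _ _ (S k)) => //; first exact: dense_box_sub Hd1 Hs2.
move=> d z [Ht Hd] Hdin Hzin Hdz; apply: Hd.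
exact: narrow_box_prod_ball Hw2 Hdin Hzin Ht Hdz.
Qed.

Definition box_monotone f o p q := forall x y, box p q x -> box p q y ->
  (forall k, leA (x k) (y k)) -> relA o (f x) (f y).

Definition box_indep T (F : Pt -> T) j p q := forall x y, box p q x -> box p q y ->
  (forall k, k != j -> x k = y k) -> F x = F y.

Definition box_dep_only T (F : Pt -> T) j p q := forall x y, box p q x -> box p q y ->
  x j = y j -> F x = F y.

Lemma box_monotone_sub f o p q p' q' :
  subbox p' q' p q -> box_monotone f o p q -> box_monotone f o p' q'.
Proof. by move=> Hs H x y Hx Hy; apply: H; exact: box_sub Hs _. Qed.

Lemma box_indep_sub T (F : Pt -> T) j p q p' q' :
  subbox p' q' p q -> box_indep F j p q -> box_indep F j p' q'.
Proof. by move=> Hs H x y Hx Hy; apply: H; exact: box_sub Hs _. Qed.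

Lemma box_dep_only_sub T (F : Pt -> T) j p q p' q' :
  subbox p' q' p q -> box_dep_only F j p q -> box_dep_only F j p' q'.
Proof. by move=> Hs H x y Hx Hy; apply: H; exact: box_sub Hs _. Qed.

Lemma box_monotone_exists f p q : continuousPA f -> valid_box p q ->
  exists o p' q', valid_box p' q' /\ subbox p' q' p q /\ box_monotone f o p' q'.
Proof. exact: (@box_relA_side f (fun _ => true) p q). Qed.

Lemma box_indep_or_dep_only f o j p q : continuousPA f -> valid_box p q ->
  box_monotone f o p q ->
  exists p' q', valid_box p' q' /\ subbox p' q' p q /\
    (box_indep f j p' q' \/ box_dep_only f j p' q').
Proof.
move=> Hf Hv Hmono.
have [o' [p' [q' [Hv' [Hs' Hside]]]]] := @box_relA_side f (fun l => l != j) p q Hf Hv.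
have {}Hmono := box_monotone_sub Hs' Hmono.
exists p', q'; split=> //; split=> //.
have [Eo|Ho] := eqVneq o' o; [subst o'; left|right].
- (* Lowering [x_j] alone moves [f] to the side [o] by [Hside], and back by monotonicity. *)
  have Hdown x y : box p' q' x -> box p' q' y -> (forall k, k != j -> x k = y k) ->
      leA (y j) (x j) -> f x = f y.
    move=> Hx Hy Hoff Hj; apply: relA_anti.
    + apply: Hside => // k; rewrite /relA; case: eqP => [->|/eqP Hk] //=.
      by rewrite (Hoff k Hk); exact: leA_refl.
    + apply: Hmono => // k; case: (eqVneq k j) => [->|Hk] //.
      by rewrite (Hoff k Hk); exact: leA_refl.
  move=> x y Hx Hy Hoff; case: (leA_total (y j) (x j)) => Hj; first exact: Hdown.
  by symmetry; apply: Hdown => // k Hk; symmetry; apply: Hoff.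
- (* Moves up off [j] go both ways; compare [x] and [y] with their coordinatewise minimum. *)
  have Hup x y : box p' q' x -> box p' q' y -> (forall k, leA (x k) (y k)) -> x j = y j ->
      f x = f y.
    move=> Hx Hy Hle Hj; apply: relA_anti (Hmono x y Hx Hy Hle) _.
    have -> : o = ~~ o' by move: Ho; case: (o); case: (o').
    apply: relA_negb; rewrite negbK; apply: Hside => // k; rewrite /relA.
    by case: eqP => [->|_] /=; [rewrite Hj; exact: leA_refl | exact: Hle].
  move=> x y Hx Hy Hj.
  have Hc k : exists a, a = x k /\ leA (x k) (y k) \/ a = y k /\ leA (y k) (x k).
    case: (leA_total (x k) (y k)) => H; [exists (x k); left | exists (y k); right] => //.
  have [z Hz] := choice Hc.
  have Hzbox : box p' q' z by move=> k; case: (Hz k) => -[-> _]; [exact: Hx | exact: Hy].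
  have Hzx k : leA (z k) (x k) by case: (Hz k) => -[-> H] //; exact: leA_refl.
  have Hzy k : leA (z k) (y k) by case: (Hz k) => -[-> H] //; exact: leA_refl.
  have Hzj : z j = x j by case: (Hz j) => -[-> _].
  by rewrite -(Hup z x) // (Hup z y) // Hzj.
Qed.

Lemma box_indep_all_const T (F : Pt -> T) p q : (forall j, box_indep F j p q) ->
  forall x y, box p q x -> box p q y -> F x = F y.
Proof.
move=> HI x y Hx Hy.
pose z (l : nat) : Pt := fun k => if (k < l)%N then y k else x k.
have Hz l : box p q (z l) by move=> k; rewrite /z; case: ifP.
have Hzl l : (l <= m)%N -> F (z l) = F x.
  elim: l => [|l IH] Hl.
  - by congr F; apply: funext => k.
  - rewrite -(IH (ltnW Hl)); apply: (HI (Ordinal Hl)) => // k Hk.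
    have Hk' : (k : nat) != l by apply: contra Hk => /eqP Ek; apply/eqP; apply: val_inj.
    by rewrite /z ltnS leq_eqVlt (negbTE Hk').
have -> : y = z m by apply: funext => k; rewrite /z ltn_ord.
by rewrite Hzl.
Qed.

End LocalStructure.

Section RegularBox.
Variables (R : realType) (m : nat).
Local Notation A := (dA R).
Local Notation Pt := ('I_m -> dA R).
Implicit Types (p q : 'I_m -> R).

Lemma subbox_all (T : finType) (P : T -> ('I_m -> R) -> ('I_m -> R) -> Prop) p0 q0 :
  valid_box p0 q0 ->
  (forall t p q p' q', subbox p' q' p q -> P t p q -> P t p' q') ->
  (forall t p q, valid_box p q -> subbox p q p0 q0 ->
     exists p' q', valid_box p' q' /\ subbox p' q' p q /\ P t p' q') ->
  exists p q, valid_box p q /\ subbox p q p0 q0 /\ forall t, P t p q.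
Proof.
move=> Hv0 Hher Hstep.
suff [p [q [Hv [Hs HP]]]] : exists p q,
    valid_box p q /\ subbox p q p0 q0 /\ forall t, t \in enum T -> P t p q.
  by exists p, q; do 2 split=> //; move=> t; apply: HP; rewrite mem_enum.
elim: (enum T) => [|t s [p [q [Hv [Hs HP]]]]].
- by exists p0, q0; do 2 split=> //; exact: subbox_refl.
- have [p' [q' [Hv' [Hs' HP']]]] := Hstep t p q Hv Hs.
  exists p', q'; split=> //; split; first exact: subbox_trans Hs' Hs.
  by move=> t'; rewrite inE => /orP[/eqP ->|Ht] //; exact: Hher Hs' (HP t' Ht).
Qed.

Lemma box_regular (I : finType) (F : I -> Pt -> A) p0 q0 :
  (forall i, continuousPA (F i)) -> valid_box p0 q0 ->
  exists p q, valid_box p q /\ subbox p q p0 q0 /\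
    (forall i, exists o, box_monotone (F i) o p q) /\
    (forall i j, box_indep (F i) j p q \/ box_dep_only (F i) j p q).
Proof.
move=> HF Hv0.
have [p1 [q1 [Hv1 [Hs1 HM]]]] : exists p q, valid_box p q /\ subbox p q p0 q0 /\
    forall i, exists o, box_monotone (F i) o p q.
  apply: (@subbox_all I (fun i p q => exists o, box_monotone (F i) o p q)) => //.
  - by move=> i p q p' q' Hs [o Ho]; exists o; exact: box_monotone_sub Hs Ho.
  - move=> i p q Hv _; have [o [p' [q' [Hv' [Hs' Ho]]]]] := box_monotone_exists (HF i) Hv.
    by exists p', q'; do 2 split=> //; exists o.
have [p2 [q2 [Hv2 [Hs2 HI]]]] : exists p q, valid_box p q /\ subbox p q p1 q1 /\
    forall ij : I * 'I_m, box_indep (F ij.1) ij.2 p q \/ box_dep_only (F ij.1) ij.2 p q.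
  apply: (@subbox_all _ (fun ij p q => box_indep (F ij.1) ij.2 p q \/
                                       box_dep_only (F ij.1) ij.2 p q)) => //.
  - move=> [i j] p q p' q' Hs [H|H].
    + by left; exact: box_indep_sub Hs H.
    + by right; exact: box_dep_only_sub Hs H.
  - move=> [i j] p q Hv Hs; have [o Ho] := HM i.
    exact: box_indep_or_dep_only (HF i) Hv (box_monotone_sub Hs Ho).
exists p2, q2; split=> //; split; first exact: subbox_trans Hs2 Hs1.
split=> [i | i j]; last exact: (HI (i, j)).
by have [o Ho] := HM i; exists o; exact: box_monotone_sub Hs2 Ho.
Qed.

End RegularBox.

(** * Homeomorphisms of the product *)

Section Homeomorphism.
Variables (R : realType) (m : nat) (h g : ('I_m -> dA R) -> ('I_m -> dA R)).
Local Notation A := (dA R).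
Local Notation Pt := ('I_m -> dA R).
Implicit Types (x y z : Pt) (p q : 'I_m -> R).
Hypotheses (gh : cancel h g) (hg : cancel g h) (ch : continuousP h) (cg : continuousP g).

Lemma continuousPA_coord i : continuousPA (fun x => h x i).
Proof. by move=> V HV; exact: (ch (openP_coord (i := i) HV)). Qed.

Lemma h_coord_nonconst p q i : valid_box p q ->
  ~ (forall x y, box p q x -> box p q y -> h x i = h y i).
Proof.
move=> Hv Hc; pose x0 := box_mid p q; have Hx0 : box p q x0 := box_mid_in Hv.
have Hg0 : box p q (g (h x0)) by rewrite gh.
have [V [HV HV']] := cg (openP_box (p := p) (q := q)) Hg0.
have [z [Vz Hz]] := openA_not_singleton (HV i).1 (HV i).2.
have Hy : box p q (g (upd (h x0) i z)).
  by apply: HV' => k; rewrite /upd; case: eqP => [->|_] //; exact: (HV k).2.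
by apply: Hz; have := Hc _ _ Hy Hx0; rewrite hg upd_eq.
Qed.

Lemma h_coord_dep_only p q i : valid_box p q ->
  (forall j, box_indep (fun x => h x i) j p q \/ box_dep_only (fun x => h x i) j p q) ->
  exists j, box_dep_only (fun x => h x i) j p q.
Proof.
move=> Hv HIO; apply: contrapT => Hn; apply: (h_coord_nonconst (i := i) Hv).
apply: box_indep_all_const => j; case: (HIO j) => // H.
by case: Hn; exists j.
Qed.

Lemma box_coord_perm p q : valid_box p q ->
  (forall i j, box_indep (fun x => h x i) j p q \/ box_dep_only (fun x => h x i) j p q) ->
  exists tau, bijective tau /\ forall j, box_dep_only (fun x => h x (tau j)) j p q.
Proof.
move=> Hv HIO; have [dep Hdep] := choice (fun i => h_coord_dep_only Hv (HIO i)).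
have Hsurj k : exists i, dep i = k.
  apply: contrapT => Hn; pose x0 := box_mid p q; have Hx0 : box p q x0 := box_mid_in Hv.
  have [z [Hzk Hz]] := openA_not_singleton (@itv_open _ (p k) (q k)) (Hx0 k).
  have E : h (upd x0 k z) = h x0.
    apply: funext => i; apply: (Hdep i) => //; first exact: box_upd.
    by rewrite upd_neq //; apply/eqP => Ei; apply: Hn; exists i.
  by apply: Hz; have := congr1 (fun x => g x k) E; rewrite !gh upd_eq.
have [tau Htau] := choice Hsurj.
exists tau; split; last by move=> j; rewrite -{2}(Htau j); exact: Hdep.
by apply: injF_bij => a b E; rewrite -(Htau a) -(Htau b) E.
Qed.

Section Factorization.
Variables (p q : 'I_m -> R) (tau : 'I_m -> 'I_m).
Hypotheses (Hv : valid_box p q) (Htau : bijective tau).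
Hypothesis Hdep : forall j, box_dep_only (fun x => h x (tau j)) j p q.
Hypothesis Hmono : forall i, exists o, box_monotone (fun x => h x i) o p q.

Let x0 := box_mid p q.
Let Hx0 : box p q x0 := box_mid_in Hv.
Let y0 := h x0.

Definition coord_map j a := h (upd x0 j a) (tau j).
Definition coord_inv j v := g (upd y0 (tau j) v) j.

Lemma h_coordE x : box p q x -> forall j, h x (tau j) = coord_map j (x j).
Proof. by move=> Hx j; apply: Hdep => //; [exact: box_upd Hx0 (Hx j) | rewrite upd_eq]. Qed.

Lemma h_upd j a : itv (p j) (q j) a -> h (upd x0 j a) = upd y0 (tau j) (coord_map j a).
Proof.
move=> Ha; have Hu := box_upd Hx0 Ha; have [tinv _ Htt] := Htau.
apply: funext => i; rewrite -(Htt i); case: (eqVneq (tinv i) j) => [->|Hk].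
  by rewrite upd_eq.
rewrite upd_neq; last by apply: contra Hk => /eqP /(bij_inj Htau) ->.
by rewrite (h_coordE Hu) upd_neq // /y0 (h_coordE Hx0).
Qed.

Lemma coord_map_inj j a b : itv (p j) (q j) a -> itv (p j) (q j) b ->
  coord_map j a = coord_map j b -> a = b.
Proof.
move=> Ha Hb E; have := h_upd Ha; rewrite E -(h_upd Hb) => E2.
by have := congr1 (fun x => g x j) E2; rewrite !gh !upd_eq.
Qed.

Lemma coord_map_mono j : exists o, forall a b, itv (p j) (q j) a -> itv (p j) (q j) b ->
  leA a b -> relA o (coord_map j a) (coord_map j b).
Proof.
have [o Ho] := Hmono (tau j); exists o => a b Ha Hb Hab.
apply: Ho; [exact: box_upd Hx0 Ha | exact: box_upd Hx0 Hb |].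
by move=> k; rewrite /upd; case: eqP => // _; exact: leA_refl.
Qed.

Lemma coord_map_strict j (S : A -> Prop) : (forall a, S a -> itv (p j) (q j) a) ->
  strictly_monotone_onA S (coord_map j).
Proof.
move=> HS; have [o Ho] := coord_map_mono j.
have Hne a b : S a -> S b -> ltA a b -> coord_map j a <> coord_map j b.
  move=> Sa Sb Hab E; have Eab := coord_map_inj (HS a Sa) (HS b Sb) E.
  by rewrite Eab in Hab; apply: ltA_irr Hab.
case: o Ho => Ho; [left|right] => a b Sa Sb Hab;
  have := Ho a b (HS a Sa) (HS b Sb) (ltAW Hab); rewrite /relA; case=> [H|H] //;
  by case: (Hne a b Sa Sb Hab); rewrite H.
Qed.

Lemma coord_map_cont j V : openA V -> openA (fun a => V (coord_map j a)).
Proof. by move=> HV; exact: (openP_upd (x := x0) (j := j) (@continuousPA_coord (tau j) V HV)). Qed.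

Lemma coord_inv_cont j V : openA V -> openA (fun v => V (coord_inv j v)).
Proof. by move=> HV; exact: (openP_upd (x := y0) (j := tau j) (cg (openP_coord (i := j) HV))). Qed.

Lemma coord_target j : exists pj qj, [/\ 0 <= pj, pj < qj, qj <= 1,
  itv pj qj (coord_map j (x0 j)) & forall v, itv pj qj v -> box p q (g (upd y0 (tau j) v))].
Proof.
have Hy0 : box p q (g y0) by rewrite /y0 gh.
have [V [HV HV']] := cg (openP_box (p := p) (q := q)) Hy0.
have [HVj Vj] := HV (tau j); rewrite /y0 (h_coordE Hx0) in Vj.
have [pj [qj [H1 [H2 [H3 [H4 H5]]]]]] := itv_around HVj Vj.
exists pj, qj; split=> // v Hv'; apply: HV' => k; rewrite /upd.
by case: eqP => [->|_]; [exact: H5 | exact: (HV k).2].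
Qed.

Lemma coord_domain_clopen j pj qj : itv pj qj (coord_map j (x0 j)) ->
  clopen_intervalA (fun a => itv (p j) (q j) a /\ itv pj qj (coord_map j a)).
Proof.
move=> H0; split; [|split].
- by exists (x0 j); split=> //; exact: Hx0.
- move=> a b c [Ia Ja] [Ic Jc] /ltAW Hab /ltAW Hbc.
  have Ib := itv_convex Ia Ic Hab Hbc; split=> //.
  have [o Ho] := coord_map_mono j.
  move: (Ho a b Ia Ib Hab) (Ho b c Ib Ic Hbc); rewrite /relA; case: (o) => H1 H2.
  + exact: itv_convex Ja Jc H1 H2.
  + exact: itv_convex Jc Ja H2 H1.
- split.
  + by apply: openA_and; [exact: itv_open | exact: coord_map_cont (itv_open (p := pj) (q := qj))].
  + apply: (@openA_ext _ (fun a => ~ itv (p j) (q j) a \/ ~ itv pj qj (coord_map j a))).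
      by move=> a; symmetry; exact: not_andP.
    by apply: openA_or; [exact: itvC_open | exact: coord_map_cont (itvC_open (p := pj) (q := qj))].
Qed.

Lemma coord_map_homeo j pj qj : (forall v, itv pj qj v -> box p q (g (upd y0 (tau j) v))) ->
  homeo_ontoA (fun a => itv (p j) (q j) a /\ itv pj qj (coord_map j a)) (itv pj qj) (coord_map j).
Proof.
move=> Hback; exists (coord_inv j); split; [|split; [|split]].
- by move=> a [Ia Ja]; split=> //; rewrite /coord_inv -(h_upd Ia) gh upd_eq.
- move=> v Hvv; have Hx' := Hback v Hvv.
  have E : coord_map j (coord_inv j v) = v by rewrite /coord_inv -(h_coordE Hx') hg upd_eq.
  by split=> //; split; [exact: Hx' j | rewrite E].
- by move=> V HV; exists (fun a => V (coord_map j a)); split; [exact: coord_map_cont | by []].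
- by move=> V HV; exists (fun v => V (coord_inv j v)); split; [exact: coord_inv_cont | by []].
Qed.

Lemma regular_box_factor : exists I : 'I_m -> A -> Prop,
  [/\ forall j, clopen_intervalA (I j), forall x, (forall j, I j (x j)) -> box p q x &
  forall j, strictly_monotone_onA (I j) (coord_map j) /\
    exists J, clopen_intervalA J /\ homeo_ontoA (I j) J (coord_map j)].
Proof.
have HJ j : exists t : R * R, [/\ 0 <= t.1, t.1 < t.2, t.2 <= 1,
    itv t.1 t.2 (coord_map j (x0 j)) & forall v, itv t.1 t.2 v -> box p q (g (upd y0 (tau j) v))].
  by have [pj [qj H]] := coord_target j; exists (pj, qj).
have [F HF] := choice HJ.
exists (fun j a => itv (p j) (q j) a /\ itv (F j).1 (F j).2 (coord_map j a)); split.
- by move=> j; have [_ _ _ H _] := HF j; exact: coord_domain_clopen H.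
- by move=> x Hx j; case: (Hx j).
- move=> j; have [H1 H2 H3 _ H5] := HF j; split; first by apply: coord_map_strict => a [].
  exists (itv (F j).1 (F j).2); split; [exact: itv_clopen_interval | exact: coord_map_homeo].
Qed.

End Factorization.

Lemma factor_box p0 q0 : valid_box p0 q0 -> exists I : 'I_m -> A -> Prop,
  [/\ forall j, clopen_intervalA (I j), forall x, (forall j, I j (x j)) -> box p0 q0 x &
  exists (hs : 'I_m -> A -> A) (tau : 'I_m -> 'I_m), bijective tau /\
    (forall j, strictly_monotone_onA (I j) (hs j) /\
       exists J, clopen_intervalA J /\ homeo_ontoA (I j) J (hs j)) /\
    (forall x, (forall j, I j (x j)) -> forall j, h x (tau j) = hs j (x j))].
Proof.
move=> Hv0.
have [p [q [Hv [Hs [HM HIO]]]]] := box_regular (F := fun i x => h x i) continuousPA_coord Hv0.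
have [tau [Htau Hdep]] := box_coord_perm Hv HIO.
have [I [HI HIbox Hhs]] := regular_box_factor Hv Htau Hdep HM.
exists I; split=> //; first by move=> x Hx; exact: box_sub Hs (HIbox x Hx).
exists (coord_map p q tau), tau; do 2 split=> //.
by move=> x Hx j; exact: h_coordE (HIbox x Hx) j.
Qed.

End Homeomorphism.

(** * A dense disjoint family of factorizing boxes *)

Section BoxTopology.
Variables (R : realType) (m : nat).
Local Notation A := (dA R).
Local Notation Pt := ('I_m -> dA R).
Implicit Types (x y : Pt) (O : Pt -> Prop) (I : 'I_m -> A -> Prop).

Definition boxI I x := forall j, I j (x j).

Lemma openP_box_around O x : openP O -> O x ->
  exists p q, valid_box p q /\ box p q x /\ forall y, box p q y -> O y.
Proof.
move=> HO Ox; have [V [HV HV']] := HO x Ox.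
have Hc j : exists t : R * R, [/\ 0 <= t.1, t.1 < t.2, t.2 <= 1, itv t.1 t.2 (x j) &
    forall d, itv t.1 t.2 d -> V j d].
  by have [p [q [? [? [? [? ?]]]]]] := itv_around (HV j).1 (HV j).2; exists (p, q).
have [F HF] := choice Hc.
exists (fun j => (F j).1), (fun j => (F j).2); split; [|split].
- by move=> j; have [] := HF j.
- by move=> j; have [] := HF j.
- by move=> y Hy; apply: HV' => j; have [_ _ _ _ H] := HF j; exact: H (Hy j).
Qed.

Lemma openP_notboxI I : (forall j, clopen_intervalA (I j)) -> openP (fun x => ~ boxI I x).
Proof.
move=> HI x Hx; have [j Hj] : exists j, ~ I j (x j).
  by apply: contrapT => Hn; apply: Hx => j; apply: contrapT => H; apply: Hn; exists j.
exists (fun k => if k == j then (fun a => ~ I j a) else (fun _ => True)); split.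
- move=> k; case: (eqVneq k j) => [->|Hk]; first by split=> //; exact: (HI j).2.2.2.
  by split=> //; exact: openAT.
- by move=> y Hy Hb; have := Hy j; rewrite eqxx; apply; exact: Hb j.
Qed.

Definition rat_box (k : nat) : ('I_m -> R) * ('I_m -> R) :=
  if @unpickle {ffun 'I_m -> rat * rat} k is Some f
  then (fun j => ratr (f j).1, fun j => ratr (f j).2) else (fun _ => 0, fun _ => 0).

Lemma rat_box_inside O : openP O -> (exists x, O x) ->
  exists k, valid_box (rat_box k).1 (rat_box k).2 /\
    forall y, box (rat_box k).1 (rat_box k).2 y -> O y.
Proof.
move=> HO [x Ox]; have [p [q [Hv [_ HO']]]] := openP_box_around HO Ox.
have Hc j : exists t : rat * rat, p j < ratr t.1 /\ ratr t.1 < ratr t.2 :> R /\ ratr t.2 < q j.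
  have [H1 [H2 H3]] := Hv j.
  have [a] := @rat_in_itvoo R (p j) ((p j + q j) / 2) ltac:(lra).
  have [b] := @rat_in_itvoo R ((p j + q j) / 2) (q j) ltac:(lra).
  by rewrite !in_itv /= => /andP [Hb1 Hb2] /andP [Ha1 Ha2]; exists (a, b) => /=; lra.
have [F HF] := choice Hc.
exists (pickle [ffun j => F j]); rewrite /rat_box pickleK /=; split.
- by move=> j; rewrite !ffunE; have := HF j; have := Hv j; lra.
- move=> y Hy; apply: HO' => j; have := Hy j; rewrite !ffunE; have := HF j.
  by move=> H; apply: itv_sub; lra.
Qed.

End BoxTopology.

Arguments rat_box {R m}.

Section DenseFamily.
Variables (R : realType) (m : nat) (h g : ('I_m -> dA R) -> ('I_m -> dA R)).
Local Notation A := (dA R).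
Local Notation Pt := ('I_m -> dA R).
Implicit Types (k : nat) (x y : Pt) (O C : Pt -> Prop) (I : 'I_m -> A -> Prop).
Hypotheses (gh : cancel h g) (hg : cancel g h) (ch : continuousP h) (cg : continuousP g).
Hypothesis m_gt0 : (0 < m)%N.
Local Notation qbox k := (@rat_box R m k).

Definition factor_box_in O I :=
  [/\ forall j, clopen_intervalA (I j), forall x, boxI I x -> O x,
      exists x, O x /\ ~ boxI I x &
      exists (hs : 'I_m -> A -> A) (tau : 'I_m -> 'I_m), bijective tau /\
       (forall j, strictly_monotone_onA (I j) (hs j) /\
          exists J, clopen_intervalA J /\ homeo_ontoA (I j) J (hs j)) /\
       (forall x, boxI I x -> forall j, h x (tau j) = hs j (x j))].

Lemma factor_box_in_exists O : openP O -> (exists x, O x) -> exists I, factor_box_in O I.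
Proof.
move=> HO [x Ox]; have [p [q [Hv [_ HO']]]] := openP_box_around HO Ox.
pose j0 := Ordinal m_gt0.
pose p1 j := if j == j0 then (p j + q j) / 2 else p j.
have Hv1 : valid_box p1 q by move=> j; rewrite /p1; have := Hv j; case: eqP => _; lra.
have Hs1 : subbox p1 q p q by move=> j; rewrite /p1; have := Hv j; case: eqP => _ H; split; lra.
have [I [HI HIbox Hfac]] := factor_box gh hg ch cg Hv1.
exists I; split=> //; first by move=> y Hy; apply: HO'; apply: box_sub Hs1 (HIbox y Hy).
have [E1 E2] : rval (mkdA (p j0) true) = p j0 /\ level (mkdA (p j0) true) = 1.
  by have [? [? ?]] := Hv j0; apply: mkdA_upper; lra.
pose x' j := if j == j0 then mkdA (p j0) true else box_mid p q j.
have Hx' : box p q x'.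
  move=> j; rewrite /x'; case: eqP => [->|_]; last exact: box_mid_in.
  by rewrite /itv E1 E2; have := Hv j0; lra.
exists x'; split; first exact: HO'.
move=> Hb; have := HIbox x' Hb j0; rewrite /x' eqxx /itv E1 E2 /p1 eqxx.
by have := Hv j0; lra.
Qed.

Definition pick_factor_box O : 'I_m -> A -> Prop :=
  if pselect (openP O /\ exists x, O x) is left H
  then proj1_sig (cid (factor_box_in_exists H.1 H.2)) else fun _ _ => False.

Lemma pick_factor_boxP O : openP O -> (exists x, O x) -> factor_box_in O (pick_factor_box O).
Proof.
move=> H1 H2; rewrite /pick_factor_box; case: pselect => [H|]; last by case.
exact: proj2_sig (cid (factor_box_in_exists H.1 H.2)).
Qed.

Definition target k C : Pt -> Prop :=
  if pselect (valid_box (qbox k).1 (qbox k).2 /\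
              exists x, box (qbox k).1 (qbox k).2 x /\ ~ C x)
  then fun x => box (qbox k).1 (qbox k).2 x /\ ~ C x
  else fun x => ~ C x.

Fixpoint covered k : Pt -> Prop :=
  if k is k'.+1 then fun x => covered k' x \/ boxI (pick_factor_box (target k' (covered k'))) x
  else fun _ => False.

Definition factor_boxes k := pick_factor_box (target k (covered k)).

Lemma target_uncovered k C x : target k C x -> ~ C x.
Proof. by rewrite /target; destruct (pselect _) => // -[]. Qed.

Lemma target_open k C : openP (fun x => ~ C x) -> (exists x, ~ C x) ->
  openP (target k C) /\ exists x, target k C x.
Proof.
move=> HC [x Cx]; rewrite /target; destruct (pselect _) as [[Hv [y Hy]]|Hn]; split=> //.
- exact: openP_and (openP_box (p := (qbox k).1) (q := (qbox k).2)) HC.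
- by exists y.
- by exists x.
Qed.

Lemma covered_inv k : openP (fun x => ~ covered k x) /\ (exists x, ~ covered k x) /\
  factor_box_in (target k (covered k)) (factor_boxes k).
Proof.
elim: k => [|k [IH1 [IH2 IH3]]].
- have H1 : openP (fun x => ~ covered 0 x).
    by move=> x _; exists (fun _ _ => True); split=> [j|y _ []] //; split=> //; exact: openAT.
  have H2 : exists x, ~ covered 0 x by exists (fun _ => dA1 R).
  by have [H3 H4] := target_open 0 H1 H2; do 2 split=> //; exact: pick_factor_boxP.
- have [G1 _ [x [Tx Hx]] _] := IH3.
  have H1 : openP (fun x => ~ covered k.+1 x).
    apply: (openP_ext (U := fun x => ~ covered k x /\ ~ boxI (factor_boxes k) x)).
      move=> y /=; rewrite /factor_boxes; split=> [[? ?] []|H] //.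
      by split=> K; apply: H; [left|right].
    exact: openP_and IH1 (openP_notboxI G1).
  have H2 : exists x, ~ covered k.+1 x.
    by exists x => /= -[K|K]; [exact: target_uncovered Tx K | exact: Hx K].
  by have [H3 H4] := target_open k.+1 H1 H2; do 2 split=> //; exact: pick_factor_boxP.
Qed.

Lemma covered_later n n' x : (n < n')%N -> boxI (factor_boxes n) x -> covered n' x.
Proof.
move=> /subnKC <- Hb; elim: (n' - n.+1)%N => [|d IH]; first by rewrite addn0; right.
by rewrite addnS; left.
Qed.

Lemma covered_boxes k x : covered k x -> exists n, boxI (factor_boxes n) x.
Proof. by elim: k => [|k IH] //= [H|H]; [exact: IH | exists k]. Qed.

Lemma factor_boxes_uncovered k x : boxI (factor_boxes k) x -> ~ covered k x.
Proof. by have [_ [_ [_ Hsub _ _]]] := covered_inv k; move/Hsub; exact: target_uncovered. Qed.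

Lemma factor_boxes_disjoint n n' x : n <> n' ->
  boxI (factor_boxes n) x -> ~ boxI (factor_boxes n') x.
Proof.
move=> Hnn' Hn Hn'; case: (ltngtP n n') => [Hlt|Hlt|Heq]; last by case: Hnn'.
- exact: (factor_boxes_uncovered Hn') (covered_later Hlt Hn).
- exact: (factor_boxes_uncovered Hn) (covered_later Hlt Hn').
Qed.

Lemma factor_boxes_dense O : openP O -> (exists x, O x) ->
  exists n x, O x /\ boxI (factor_boxes n) x.
Proof.
move=> HO HOx; have [k [Hvk Hk]] := rat_box_inside HO HOx.
case: (pselect (exists x, box (qbox k).1 (qbox k).2 x /\ ~ covered k x)) => [Hc|Hc].
- have [_ [_ [HI Hsub _ _]]] := covered_inv k; have [x Hx] := box_nonempty HI.
  exists k, x; split=> //; apply: Hk; move: (Hsub x Hx); rewrite /target.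
  by case: pselect => [_ []|[]].
- have Hmid := box_mid_in Hvk.
  have HC : covered k (box_mid (qbox k).1 (qbox k).2).
    by apply: contrapT => Hn; apply: Hc; exists (box_mid (qbox k).1 (qbox k).2).
  have [n Hn] := covered_boxes HC.
  by exists n, (box_mid (qbox k).1 (qbox k).2); split=> //; exact: Hk.
Qed.

Lemma factor_boxes_clopen k j : clopen_intervalA (factor_boxes k j).
Proof. by have [_ [_ [HI _ _ _]]] := covered_inv k. Qed.

Lemma factor_boxes_factor k : exists (hs : 'I_m -> A -> A) (tau : 'I_m -> 'I_m),
  bijective tau /\
  (forall j, strictly_monotone_onA (factor_boxes k j) (hs j) /\
     exists J, clopen_intervalA J /\ homeo_ontoA (factor_boxes k j) J (hs j)) /\
  (forall x, boxI (factor_boxes k) x -> forall j, h x (tau j) = hs j (x j)).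
Proof. by have [_ [_ [_ _ _ H]]] := covered_inv k. Qed.

End DenseFamily.

Theorem theorem1p3 (R : realType) (m : nat) (hm : (0 < m)%N)
    (h : ('I_m -> dA R) -> ('I_m -> dA R)) (hh : homeomorphismP h) :
  exists (I : nat -> 'I_m -> dA R -> Prop),
    (forall n j, clopen_intervalA (I n j)) /\
    (* pairwise disjoint boxes U_n = prod_j I n j *)
    (forall n n' x, n <> n' -> (forall j, I n j (x j)) -> ~ (forall j, I n' j (x j))) /\
    (* the union is dense *)
    (forall O : ('I_m -> dA R) -> Prop, openP O -> (exists x, O x) ->
       exists n x, O x /\ forall j, I n j (x j)) /\
    (forall n, exists (hs : 'I_m -> dA R -> dA R) (tau : 'I_m -> 'I_m),
       bijective tau /\
       (forall j, strictly_monotone_onA (I n j) (hs j) /\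
          exists J, clopen_intervalA J /\ homeo_ontoA (I n j) J (hs j)) /\
       (forall x, (forall j, I n j (x j)) ->
          forall j, h x (tau j) = hs j (x j))).
Proof.
have [g [gh [hg [ch cg]]]] := hh.
exists (factor_boxes gh hg ch cg hm); split; [|split; [|split]].
- exact: factor_boxes_clopen.
- exact: factor_boxes_disjoint.
- exact: factor_boxes_dense.
- exact: factor_boxes_factor.
Qed.
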